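(* Let $\tilde{\Phi}:\mathbb{R}_{++}^{n\times m}\to\mathbb{R}$ be smooth and strictly convex, and suppose its gradient map $S:\mathbb{R}_{++}^{n\times m}\to\mathbb{R}^{n\times m}$, $S^{ij}(A)=\partial\tilde{\Phi}/\partial A_{ij}(A)$, is surjective. Let $\Phi$ be the restriction of $\tilde{\Phi}$ to $\mathcal{P}_{nm-1}$. Then for each $p\in\mathcal{P}_{n-1}$, $q\in\mathcal{P}_{m-1}$, the problem of minimizing $\Phi(P)$ over $P\in\Pi(p,q)$ has a unique solution $P^*(p,q)\in\Pi(p,q)$ (in particular the infimum of $\Phi$ over $\Pi(p,q)$ is attained at a matrix with strictly positive entries, and $P^*(p,q)$ is also the unique minimizer over the closure $\overline{\Pi(p,q)}$ of the continuous extension of $\Phi$). Moreover, a maximizer $(\alpha^*,\beta^* )\in\mathbb{R}^n\times\mathbb{R}^m$ of the dual problem $\sup_{\alpha,\beta}\{\langle p,\alpha\rangle+\langle q,\beta\rangle-\tilde{\Phi}^*(\alpha\oplus\beta)\}$ exists, and any such maximizer satisfies \[ S^{ij}(P^*(p,q))=(\alpha^* )^i+(\beta^* )^j,\qquad 1\le i\le n,\ 1\le j\le m. \]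
   Context: $\mathbb{R}_{++}^{n\times m}$ denotes the set of real $n\times m$ matrices with all entries strictly positive. $\mathcal{P}_{n-1}=\{p\in\mathbb{R}^n:\sum_i p_i=1,\ p_i>0\}$, similarly $\mathcal{P}_{m-1}$, and $\mathcal{P}_{nm-1}=\{P\in\mathbb{R}_{++}^{n\times m}:\sum_{i,j}P_{ij}=1\}$. $\Pi(p,q)=\{P\in\mathcal{P}_{nm-1}:\sum_j P_{ij}=p_i\ \forall i,\ \sum_i P_{ij}=q_j\ \forall j\}$, and $\overline{\Pi(p,q)}$ is its closure in $\mathbb{R}^{n\times m}$. The Legendre transform is $\tilde{\Phi}^*(u)=\sup_{A\in\mathbb{R}_{++}^{n\times m}}\{\langle A,u\rangle-\tilde{\Phi}(A)\}$ with $\langle A,u\rangle=\sum_{i,j}A_{ij}u^{ij}$, and $(\alpha\oplus\beta)^{ij}=\alpha^i+\beta^j$. *)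

From HB Require Import structures.
From mathcomp Require Import all_boot all_order all_algebra.
From mathcomp Require Import all_classical all_reals all_analysis.
Set Implicit Arguments. Unset Strict Implicit. Unset Printing Implicit Defensive.
Import Order.TTheory GRing.Theory Num.Theory.
Import numFieldNormedType.Exports.
Local Open Scope classical_set_scope.
Local Open Scope ring_scope.

Section Defs.
Variables (R : realType) (n m : nat).
Notation M := 'M[R]_(n, m).

Definition pos_mx : set M := [set A | forall i j, 0 < A i j].

Definition simplex_pos (k : nat) : set ('I_k -> R) :=
  [set p | (forall i, 0 < p i) /\ \sum_(i < k) p i = 1].

Definition simplex_mx : set M :=
  [set P | P \in pos_mx /\ \sum_(i < n) \sum_(j < m) P i j = 1].

Definition Pi (p : 'I_n -> R) (q : 'I_m -> R) : set M :=
  [set P | P \in simplex_mx /\ (forall i, \sum_(j < m) P i j = p i)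
                         /\ (forall j, \sum_(i < n) P i j = q j)].

Definition mx_inner (A u : M) : R := \sum_(i < n) \sum_(j < m) A i j * u i j.

Definition unit_dir (ij : 'I_n * 'I_m) : M := delta_mx ij.1 ij.2.

Definition iter_partial (l : seq ('I_n * 'I_m)) (f : M -> R) : M -> R :=
  foldr (fun ij g => fun A => 'D_(unit_dir ij) g A) f l.

Definition smooth_on (D : set M) (f : M -> R) : Prop :=
  forall l : seq ('I_n * 'I_m),
    (forall A, A \in D -> {for A, continuous (iter_partial l f)}) /\
    (forall ij A, A \in D -> derivable (iter_partial l f) A (unit_dir ij)).

Definition strictly_convex_on (D : set M) (f : M -> R) : Prop :=
  forall A B (t : R), A \in D -> B \in D -> A != B -> 0 < t < 1 ->
    f (t *: A + (1 - t) *: B) < t * f A + (1 - t) * f B.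

Definition grad (f : M -> R) (A : M) : M :=
  \matrix_(i, j) 'D_(unit_dir (i, j)) f A.

Definition legendre (f : M -> R) (u : M) : \bar R :=
  ereal_sup [set ((mx_inner A u - f A)%:E) | A in pos_mx].

Definition oplus (a : 'I_n -> R) (b : 'I_m -> R) : M := \matrix_(i, j) (a i + b j).

Definition dual_obj (f : M -> R) (p : 'I_n -> R) (q : 'I_m -> R)
  (a : 'I_n -> R) (b : 'I_m -> R) : \bar R :=
  ((\sum_(i < n) p i * a i + \sum_(j < m) q j * b j)%:E
     - legendre f (oplus a b))%E.

Definition is_dual_max (f : M -> R) p q a b : Prop :=
  forall a' b', (dual_obj f p q a' b' <= dual_obj f p q a b)%E.

Definition unique_minimizer (D : set M) (g : M -> R) (P : M) : Prop :=
  P \in D /\ (forall Q, Q \in D -> g P <= g Q) /\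
  (forall Q, Q \in D -> (forall Q', Q' \in D -> g Q <= g Q') -> Q = P).

End Defs.

(* The argument is convex duality:
   - the gradient inequality, derived from partial derivatives and convexity
     alone, and its strict form show that grad Phi has an inverse grad_inv:
     grad_inv u is the unique minimiser of Phi - <., u> on the cone, so the
     Legendre transform Phi^*(u) is attained there; a growth estimate makes
     grad_inv continuous;
   - as a function of u = alpha (+) beta, the dual objective is
     dual_fun u = <P0, u> - Phi^*(u) with P0 = p q^T; it is continuous and
     coercive, so it has a maximiser us on the closed space of matrices of
     the form alpha (+) beta, and the first-order condition there says that
     P = grad_inv us has marginals p and q;
   - since grad Phi P = us pairs equally with all couplings, P is the strict
     minimiser on Pi(p, q) (and, by a limiting argument, on its closure);
     weak duality shows us is dual optimal, and complementary slackness
     gives grad Phi P = alpha + beta for every dual maximiser. *)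

From HB Require Import structures.
From mathcomp Require Import all_boot all_order all_algebra.
From mathcomp Require Import all_classical all_reals all_analysis.
From mathcomp Require Import ring lra.
Import Order.TTheory GRing.Theory Num.Theory.
Import numFieldNormedType.Exports.
Local Open Scope classical_set_scope.
Local Open Scope ring_scope.
Set Implicit Arguments.
Unset Strict Implicit.

Section MatrixInner.
Variables (R : realType) (n m : nat).
Implicit Types (A B X u v : 'M[R]_(n, m)) (a : R).

Lemma mx_innerDl A B u : mx_inner (A + B) u = mx_inner A u + mx_inner B u.
Proof.
rewrite /mx_inner -big_split; apply: eq_bigr => i _.
by rewrite -big_split; apply: eq_bigr => j _; rewrite mxE mulrDl.
Qed.

Lemma mx_innerZl a A u : mx_inner (a *: A) u = a * mx_inner A u.
Proof.
rewrite /mx_inner mulr_sumr; apply: eq_bigr => i _.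
by rewrite mulr_sumr; apply: eq_bigr => j _; rewrite mxE mulrA.
Qed.

Lemma mx_innerDr A u v : mx_inner A (u + v) = mx_inner A u + mx_inner A v.
Proof.
rewrite /mx_inner -big_split; apply: eq_bigr => i _.
by rewrite -big_split; apply: eq_bigr => j _; rewrite mxE mulrDr.
Qed.

Lemma mx_innerZr a A u : mx_inner A (a *: u) = a * mx_inner A u.
Proof.
rewrite /mx_inner mulr_sumr; apply: eq_bigr => i _.
by rewrite mulr_sumr; apply: eq_bigr => j _; rewrite mxE mulrCA.
Qed.

Lemma mx_inner0l u : mx_inner 0 u = 0.
Proof. by have := mx_innerZl 0 0 u; rewrite scale0r mul0r. Qed.

Lemma mx_innerNl A u : mx_inner (- A) u = - mx_inner A u.
Proof. by rewrite -scaleN1r mx_innerZl mulN1r. Qed.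

Lemma mx_innerBl A B u : mx_inner (A - B) u = mx_inner A u - mx_inner B u.
Proof. by rewrite mx_innerDl mx_innerNl. Qed.

Lemma mx_innerNr A u : mx_inner A (- u) = - mx_inner A u.
Proof. by rewrite -scaleN1r mx_innerZr mulN1r. Qed.

Lemma mx_innerBr A u v : mx_inner A (u - v) = mx_inner A u - mx_inner A v.
Proof. by rewrite mx_innerDr mx_innerNr. Qed.

Lemma mx_inner_deltal i j u : mx_inner (delta_mx i j) u = u i j.
Proof.
rewrite /mx_inner (bigD1 i) //= (bigD1 j) //= !mxE !eqxx mul1r.
rewrite big1 ?addr0 => [|k kj]; last by rewrite mxE eqxx (negbTE kj) mul0r.
rewrite big1 ?addr0 // => k ki; apply: big1 => l _.
by rewrite mxE (negbTE ki) mul0r.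
Qed.

Lemma mx_inner_deltar i j A : mx_inner A (delta_mx i j) = A i j.
Proof.
rewrite /mx_inner (bigD1 i) //= (bigD1 j) //= !mxE !eqxx mulr1.
rewrite big1 ?addr0 => [|k kj]; last by rewrite mxE eqxx (negbTE kj) mulr0.
rewrite big1 ?addr0 // => k ki; apply: big1 => l _.
by rewrite mxE (negbTE ki) mulr0.
Qed.

Lemma mx_inner_oplus A alpha beta : mx_inner A (oplus alpha beta) =
  \sum_(i < n) (\sum_(j < m) A i j) * alpha i +
  \sum_(j < m) (\sum_(i < n) A i j) * beta j.
Proof.
rewrite /mx_inner.
have rowE i : \sum_(j < m) A i j * oplus alpha beta i j =
    (\sum_(j < m) A i j) * alpha i + \sum_(j < m) A i j * beta j.
  by rewrite mulr_suml -big_split; apply: eq_bigr => j _; rewrite mxE mulrDr.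
rewrite (eq_bigr _ (fun i _ => rowE i)) big_split /=; congr (_ + _).
by rewrite exchange_big; apply: eq_bigr => j _; rewrite mulr_suml.
Qed.

Lemma mx_inner_marginals A B alpha beta :
  (forall i, \sum_(j < m) A i j = \sum_(j < m) B i j) ->
  (forall j, \sum_(i < n) A i j = \sum_(i < n) B i j) ->
  mx_inner A (oplus alpha beta) = mx_inner B (oplus alpha beta).
Proof.
move=> Hrow Hcol; rewrite !mx_inner_oplus; congr (_ + _); apply: eq_bigr => k _.
  by rewrite Hrow.
by rewrite Hcol.
Qed.

Definition row_sel (i : 'I_n) : 'M[R]_(n, m) :=
  oplus (fun k => (k == i)%:R) (fun _ => 0).
Definition col_sel (j : 'I_m) : 'M[R]_(n, m) :=
  oplus (fun _ => 0) (fun k => (k == j)%:R).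

Lemma mx_inner_row_sel A i : mx_inner A (row_sel i) = \sum_(j < m) A i j.
Proof.
rewrite mx_inner_oplus [X in _ + X]big1 ?addr0 => [|k _]; last by rewrite mulr0.
rewrite (bigD1 i) //= eqxx mulr1 [X in _ + X]big1 ?addr0 // => k ki.
by rewrite (negbTE ki) mulr0.
Qed.

Lemma mx_inner_col_sel A j : mx_inner A (col_sel j) = \sum_(i < n) A i j.
Proof.
rewrite mx_inner_oplus big1 ?add0r => [|k _]; last by rewrite mulr0.
rewrite (bigD1 j) //= eqxx mulr1 [X in _ + X]big1 ?addr0 // => k kj.
by rewrite (negbTE kj) mulr0.
Qed.

Lemma mx_entry_le X i j : `|X i j| <= `|X|.
Proof.
have -> : `|X| = mx_norm X by []; rewrite mx_normrE.
exact: (le_bigmax _ (fun ij : 'I_n * 'I_m => `|X ij.1 ij.2|) (i, j)).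
Qed.

Lemma mx_norm_le X c : 0 <= c -> (forall i j, `|X i j| <= c) -> `|X| <= c.
Proof.
move=> c0 H; have -> : `|X| = mx_norm X by []; rewrite mx_normrE.
by apply/bigmax_leP; split => // -[i j] _; apply: H.
Qed.

Lemma delta_mx_norm i j : `|delta_mx i j : 'M[R]_(n, m)| <= 1.
Proof.
apply: mx_norm_le => // k l; rewrite mxE.
by case: (_ && _); rewrite ?normr1 ?normr0.
Qed.

Lemma mx_inner_bound A u : `|mx_inner A u| <= (n * m)%:R * (`|A| * `|u|).
Proof.
rewrite /mx_inner; apply: (le_trans (ler_norm_sum _ _ _)).
have -> : (n * m)%:R * (`|A| * `|u|) =
   \sum_(i < n) \sum_(j < m) (`|A| * `|u|).
  by rewrite sumr_const card_ord sumr_const card_ord -mulrnA mulr_natl mulnC.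
apply: ler_sum => i _; apply: (le_trans (ler_norm_sum _ _ _)).
apply: ler_sum => j _; rewrite normrM.
by apply: ler_pM => //; apply: mx_entry_le.
Qed.

End MatrixInner.

Section MatrixTopology.
Variables (R : realType) (n m : nat).
Local Notation M := 'M[R]_(n, m).

Lemma vec_mx_continuous : continuous (@vec_mx R n m).
Proof.
move=> v; apply/(@cvgrPdist_lt _ _ _ _ (@nbhs_filter _ v)) => e e0.
apply/(@nbhs_normP _ 'rV[R]_(n * m)); exists e => //= w.
rewrite /ball_ /= => Hw; rewrite -linearB /=; apply: le_lt_trans Hw.
by apply: mx_norm_le => // i j; rewrite mxE; exact: mx_entry_le.
Qed.

(* Heine-Borel for matrices, transported from row vectors through vec_mx. *)
Lemma bounded_closed_compact_mx (S : set M) (c : R) :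
  (forall X, S X -> `|X| <= c) -> closed S -> compact S.
Proof.
move=> Sb Sc.
have -> : S = (@vec_mx R n m) @` ((@vec_mx R n m) @^-1` S).
  apply/seteqP; split => [X SX|_ [v Sv <-] //].
  by exists (mxvec X); rewrite /= mxvecK.
have mxvec_norm (X : M) : `|mxvec X| <= `|X|.
  apply: mx_norm_le => // i k; rewrite ord1.
  by case/mxvec_indexP: k => a b; rewrite mxvecE; exact: mx_entry_le.
apply: continuous_compact.
  by apply: continuous_subspaceT => x; apply: vec_mx_continuous.
apply: bounded_closed_compact.
  apply: filterS (nbhs_pinfty_ge (num_real c)) => N cN v Sv.
  rewrite /= -[v]vec_mxK; apply: le_trans (mxvec_norm _) _.
  exact: le_trans (Sb _ Sv) cN.
by apply: preimage_closed => // x _; apply: vec_mx_continuous.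
Qed.

Lemma mx_inner_cvg (T : Type) (F : set_system T) {FF : Filter F}
   (f g : T -> M) (A u : M) :
  f @ F --> A -> g @ F --> u -> (fun x => mx_inner (f x) (g x)) @ F --> mx_inner A u.
Proof.
move=> Hf Hg; rewrite /mx_inner.
apply: cvg_big => // [|i _]; first exact: add_continuous.
apply: cvg_big => // [|j _]; first exact: add_continuous.
apply: cvgM.
  exact: (cvg_comp _ _ Hf (@coord_continuous _ _ _ i j A)).
exact: (cvg_comp _ _ Hg (@coord_continuous _ _ _ i j u)).
Qed.

Lemma mx_inner_continuous (u : M) : continuous (fun X : M => mx_inner X u).
Proof.
by move=> X; exact: (@mx_inner_cvg _ (nbhs X) _ id (cst u) X u cvg_id (cvg_cst u)).
Qed.

Lemma dist_continuous (A : M) : continuous (fun X : M => `|X - A|).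
Proof.
move=> X; apply/(@cvgrPdist_lt _ _ _ _ (@nbhs_filter _ X)) => e e0.
apply/(@nbhs_normP _ M); exists e => // Y; rewrite /ball_ /= => HY.
apply: le_lt_trans HY; apply: le_trans (ler_dist_dist _ _) _.
by rewrite opprB addrA subrK.
Qed.

Lemma continuous_at_dist (f : M -> R) (X : M) : {for X, continuous f} ->
  forall e, 0 < e -> exists2 d, 0 < d & forall Y, `|X - Y| < d -> `|f X - f Y| < e.
Proof.
move=> Hf e e0.
have := (@cvgrPdist_lt _ _ _ _ (@nbhs_filter _ X) f (f X)).1 Hf e e0.
move/(@nbhs_normP _ M) => [d d0 Hd]; exists d => // Y HY; exact: Hd.
Qed.

Lemma within_continuous_dist (S : set M) (f : M -> R) (X : M) :
  {within S, continuous f} -> S X ->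
  forall e, 0 < e -> exists2 d, 0 < d &
    forall Y, `|X - Y| < d -> S Y -> `|f X - f Y| < e.
Proof.
move=> /subspace_continuousP Hf SX e e0.
have := (@cvgrPdist_lt _ _ _ _ _ f (f X)).1 (Hf X SX) e e0.
move=> /(_ (within_filter _ _)) H.
have {}H : \forall Y \near X, S Y -> `|f X - f Y| < e by exact: H.
move/(@nbhs_normP _ M) : H => [d d0 Hd]; exists d => // Y HY SY; exact: Hd.
Qed.

Lemma closure_dist (S : set M) (Q : M) d : closure S Q -> 0 < d ->
  exists X, S X /\ `|Q - X| < d.
Proof.
move=> HQ d0.
have : nbhs Q [set X | `|Q - X| < d] by apply/(@nbhs_normP _ M); exists d.
by move/HQ => [X [SX HX]]; exists X.
Qed.

Lemma closure_halfspace (S : set M) (u : M) c (Q : M) : closure S Q ->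
  (forall X, S X -> c <= mx_inner X u) -> c <= mx_inner Q u.
Proof.
move=> HQ HS.
have Hcl : closed ((fun X : M => mx_inner X u) @^-1` [set x | c <= x]).
  apply: preimage_closed; last exact: closed_ge.
  by move=> X _; exact: mx_inner_continuous.
have /(_ Q HQ) : closure S `<=` closure ((fun X : M => mx_inner X u) @^-1` [set x | c <= x]).
  by apply: closureS => X /HS.
by rewrite -(proj1 (closure_id _) Hcl).
Qed.

Lemma closure_lower_bound (S : set M) (f : M -> R) (c : R) :
  {within closure S, continuous f} -> (forall X, S X -> c <= f X) ->
  forall Q, closure S Q -> c <= f Q.
Proof.
move=> fc Hc Q HQ; rewrite leNgt; apply/negP => Hlt.
have [d d0 Hd] := within_continuous_dist fc HQ
  (ltac:(by rewrite subr_gt0) : 0 < c - f Q).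
have [X [SX HX]] := closure_dist HQ d0.
have := Hd X HX (subset_closure SX); have := Hc X SX.
move=> H /ltr_normlP [H1 H2]; lra.
Qed.

End MatrixTopology.

(* If t * (c - g t) <= 0 for all t, then g cannot be continuous at 0 unless
   g 0 = c: otherwise c - g t keeps the sign of c - g 0 near 0. *)
Lemma sign_condition_at0 (R : realType) (g : R -> R) (c : R) :
  {for 0, continuous g} -> (forall t, t * (c - g t) <= 0) -> g 0 = c.
Proof.
move=> gc Hsign; apply/eqP; rewrite eq_sym -subr_eq0; apply/negPn/negP => dn0.
have d0 : 0 < `|c - g 0| by rewrite normr_gt0.
have := (@cvgrPdist_lt _ _ _ _ (nbhs_filter (0 : R)) g (g 0)).1 gc _ d0.
move/(@nbhs_normP _ R^o) => [de de0 Hde].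
have near t : `|t| < de -> `|g 0 - g t| < `|c - g 0|.
  by move=> tde; apply: Hde; rewrite /ball_ /= sub0r normrN.
have de2 : 0 < de / 2 by rewrite divr_gt0.
have de2lt : de / 2 < de by rewrite ltr_pdivrMr // ltr_pMr // ltr1n.
have [dpos|dneg] := ltP 0 (c - g 0).
  have := near (de / 2) ltac:(by rewrite gtr0_norm).
  rewrite (gtr0_norm dpos) => /ltr_normlP [H1 H2].
  have : 0 < de / 2 * (c - g (de / 2)) by rewrite mulr_gt0 //; lra.
  by rewrite ltNge Hsign.
have dlt : c - g 0 < 0 by rewrite lt_neqAle dn0 dneg.
have := near (- (de / 2)) ltac:(by rewrite normrN gtr0_norm).
rewrite (ltr0_norm dlt) => /ltr_normlP [H1 H2].
have : 0 < - (de / 2) * (c - g (- (de / 2))).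
  by rewrite mulNr -mulrN mulr_gt0 //; lra.
by rewrite ltNge Hsign.
Qed.

Lemma strict_unique_minimizer (R : realType) (n m : nat) (D : set 'M[R]_(n, m))
    (f : 'M[R]_(n, m) -> R) (P : 'M[R]_(n, m)) :
  P \in D -> (forall Q, Q \in D -> Q != P -> f P < f Q) -> unique_minimizer D f P.
Proof.
move=> HP Hs; split => //; split.
  by move=> Q HQ; have [->|QP] := eqVneq Q P; [exact: lexx | exact/ltW/Hs].
move=> Q HQ Hmin; apply/eqP/negPn/negP => QP.
by have := Hmin P HP; rewrite leNgt Hs.
Qed.

Section PositiveCone.
Variables (R : realType) (n m : nat).
Local Notation M := 'M[R]_(n, m).
Local Notation pos := (@pos_mx R n m).

Lemma posP (A : M) : A \in pos <-> forall i j, 0 < A i j.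
Proof. by rewrite inE. Qed.

Lemma pos_conv (A B : M) t : A \in pos -> B \in pos -> 0 <= t <= 1 ->
  t *: A + (1 - t) *: B \in pos.
Proof.
move=> /posP HA /posP HB /andP[t0 t1]; apply/posP => i j; rewrite !mxE.
have := HA i j; have := HB i j; nra.
Qed.

(* The positive cone is open: a ball of radius min_ij A_ij fits inside. *)
Lemma pos_open (A : M) : A \in pos ->
  exists2 r : R, 0 < r & forall X, `|X - A| < r -> X \in pos.
Proof.
move=> /posP HA.
pose r := \big[Order.min/1]_(k : 'I_n * 'I_m) A k.1 k.2.
have r0 : 0 < r by apply: lt_bigmin => // -[i j] _; apply: HA.
exists r => // X HX; apply/posP => i j.
have rle : r <= A i j.
  exact: (bigmin_le _ (i, j) (fun k : 'I_n * 'I_m => A k.1 k.2)).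
have : `|(X - A) i j| < r by apply: le_lt_trans HX; apply: mx_entry_le.
rewrite !mxE => /ltr_normlP [H _]; lra.
Qed.

Lemma pos_line (A d : M) : A \in pos ->
  exists2 e : R, 0 < e & forall t, `|t| < e -> A + t *: d \in pos.
Proof.
move=> /pos_open [r r0 Hr]; exists (r / (`|d| + 1)).
  by rewrite divr_gt0 // ltr_wpDl.
move=> t Ht; apply: Hr; rewrite addrC addKr normrZ.
have d1 : 0 < `|d| + 1 by rewrite ltr_wpDl.
apply: (@le_lt_trans _ _ (`|t| * (`|d| + 1))).
  by rewrite ler_wpM2l // lerDl.
by rewrite -ltr_pdivlMr.
Qed.

End PositiveCone.

Lemma strictly_convex_le (R : realType) (n m : nat) (D : set 'M[R]_(n, m))
    (f : 'M[R]_(n, m) -> R) : strictly_convex_on D f ->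
  forall A B t, A \in D -> B \in D -> 0 <= t <= 1 ->
  f (t *: A + (1 - t) *: B) <= t * f A + (1 - t) * f B.
Proof.
move=> Hc A B t HA HB /andP[t0 t1].
have [->|tn0] := eqVneq t 0.
  by rewrite scale0r mul0r !add0r subr0 scale1r mul1r.
have [->|tn1] := eqVneq t 1.
  by rewrite subrr scale0r mul0r !addr0 scale1r mul1r.
have [->|AB] := eqVneq A B; first by rewrite -scalerDl -mulrDl subrKC scale1r mul1r.
by apply/ltW/Hc => //; rewrite lt0r tn0 t0 /= lt_neqAle tn1 t1.
Qed.

(* First-order characterisation of convexity, assuming only that the partial
   derivatives exist at A: the one-sided difference quotients along d are
   asymptotically bounded by <d, grad f A>; this bound is stable under sums
   (by convexity) and holds along coordinate directions (by definition of
   the partial derivatives), hence holds in every direction. *)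
Section GradientInequality.
Variables (R : realType) (n m : nat) (f : 'M[R]_(n, m) -> R).
Local Notation M := 'M[R]_(n, m).
Local Notation pos := (@pos_mx R n m).
Hypothesis f_convex : forall A B t, A \in pos -> B \in pos -> 0 <= t <= 1 ->
  f (t *: A + (1 - t) *: B) <= t * f A + (1 - t) * f B.
Variable A : M.
Hypothesis HA : A \in pos.
Hypothesis f_partial : forall ij, derivable f A (unit_dir R ij).

Let u := grad f A.
Let slope (d : M) (t : R) := (f (A + t *: d) - f A) / t.
Let upper_slope (d : M) := forall e : R, 0 < e -> exists2 de : R, 0 < de &
  forall t, 0 < t < de -> slope d t <= mx_inner d u + e.

Let upper_slope0 : upper_slope 0.
Proof.
move=> e e0; exists 1 => // t _.
by rewrite /slope scaler0 addr0 subrr mul0r mx_inner0l add0r ltW.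
Qed.

(* A + t (d1 + d2) is the midpoint of A + 2t d1 and A + 2t d2. *)
Let upper_slopeD d1 d2 : upper_slope d1 -> upper_slope d2 -> upper_slope (d1 + d2).
Proof.
move=> H1 H2 e e0.
have e2 : 0 < e / 2 by rewrite divr_gt0.
have [a1 a10 Ha1] := H1 _ e2; have [a2 a20 Ha2] := H2 _ e2.
have [b1 b10 Hb1] := pos_line d1 HA; have [b2 b20 Hb2] := pos_line d2 HA.
pose de := Num.min (Num.min a1 a2) (Num.min b1 b2) / 2.
have de0 : 0 < de by rewrite divr_gt0 // !lt_min a10 a20 b10 b20.
exists de => // t /andP[t0 tde].
have : 2 * t < Num.min (Num.min a1 a2) (Num.min b1 b2) by rewrite mulrC -ltr_pdivlMr.
rewrite !lt_min => /andP[/andP[ta1 ta2] /andP[tb1 tb2]].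
have t20 : 0 < 2 * t by rewrite mulr_gt0.
have P1 := Hb1 (2 * t) ltac:(by rewrite gtr0_norm).
have P2 := Hb2 (2 * t) ltac:(by rewrite gtr0_norm).
have Q1 := Ha1 (2 * t) ltac:(by rewrite t20 ta1).
have Q2 := Ha2 (2 * t) ltac:(by rewrite t20 ta2).
have Hcv := @f_convex _ _ (1/2) P1 P2
  ltac:(by rewrite divr_ge0 //= ler_pdivrMr // mul1r ler1n).
have mid : (1 / 2) *: (A + (2 * t) *: d1) + (1 - 1 / 2) *: (A + (2 * t) *: d2)
   = A + t *: (d1 + d2).
  by apply/matrixP => i j; rewrite !mxE; field.
rewrite mid in Hcv; move: Q1 Q2; rewrite /slope mx_innerDl.
rewrite ler_pdivrMr // => Q1; rewrite ler_pdivrMr // => Q2.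
rewrite ler_pdivrMr //.
have -> : (mx_inner d1 u + mx_inner d2 u + e) * t =
  ((mx_inner d1 u + e / 2) * (2 * t) + (mx_inner d2 u + e / 2) * (2 * t)) / 2.
  by field.
move: Hcv Q1 Q2.
set x := f (A + t *: (d1 + d2)); set x1 := f (A + (2 * t) *: d1).
set x2 := f (A + (2 * t) *: d2); set y := f A.
set z1 := (mx_inner d1 u + e / 2) * (2 * t).
set z2 := (mx_inner d2 u + e / 2) * (2 * t).
move=> Hcv Q1 Q2; lra.
Qed.

(* Along c E_ij the quotient tends to c * (grad f A)_ij. *)
Let upper_slope_unit (c : R) (i : 'I_n) (j : 'I_m) : upper_slope (c *: delta_mx i j).
Proof.
have [->|c0] := eqVneq c 0; first by rewrite scale0r; exact: upper_slope0.
have ca : 0 < `|c| by rewrite normr_gt0.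
move=> eps eps0.
have Hcv : (fun h : R => h^-1 *: ((f \o shift A) (h *: unit_dir R (i, j)) - f A))
    @ 0^' --> 'D_(unit_dir R (i, j)) f A := @f_partial (i, j).
move/cvgrPdist_lt : Hcv => /(_ (eps / `|c|)) /=.
rewrite divr_gt0 // => /(_ isT).
rewrite /dnbhs /within /= => /nbhs_normP [e e0 He].
exists (e / `|c|); first by rewrite divr_gt0.
move=> t /andP[t0 te].
have hne : t * c != 0 by rewrite mulf_neq0 // gt_eqF.
have hb : ball_ Num.Def.normr 0 e (t * c).
  by rewrite /ball_ /= sub0r normrN normrM gtr0_norm // -ltr_pdivlMr.
have := He _ hb hne.
rewrite mx_innerZl mx_inner_deltal /slope.
have -> : u i j = 'D_(unit_dir R (i, j)) f A by rewrite /u /grad mxE.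
have -> : A + t *: (c *: delta_mx i j) = (t * c) *: unit_dir R (i, j) + A.
  by rewrite addrC scalerA.
set D := 'D_(unit_dir R (i, j)) f A.
set z := f ((t * c) *: unit_dir R (i, j) + A) - f A.
have -> : z / t = c * ((t * c)^-1 *: z).
  by rewrite /GRing.scale /= invfM mulrA mulrCA mulfV // mulr1 mulrC.
move=> H.
have : `|c * D - c * ((t * c)^-1 *: z)| < eps.
  by rewrite -mulrBr normrM mulrC -ltr_pdivlMr.
move/ltr_normlP => [H1 H2]; lra.
Qed.

Let upper_slope_all d : upper_slope d.
Proof.
rewrite (matrix_sum_delta d).
apply: (big_ind upper_slope upper_slope0 upper_slopeD) => i _.
apply: (big_ind upper_slope upper_slope0 upper_slopeD) => j _.
exact: upper_slope_unit.
Qed.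

(* Convexity squeezes f between its chord values along B - A at A and its
   value at A - t (B - A), so a positive slope deficit would contradict
   the upper slope bound in direction A - B. *)
Lemma gradient_inequality (B : M) : B \in pos -> f A + mx_inner (B - A) u <= f B.
Proof.
move=> HB.
rewrite -subr_ge0 -[X in _ <= X]subr0; apply/ler_addgt0Pr => eps eps0.
have [de de0 Hde] := @upper_slope_all (- (B - A)) eps eps0.
have [b b0 Hb] := pos_line (- (B - A)) HA.
pose t := Num.min (Num.min de b) 1 / 2.
have t0 : 0 < t by rewrite divr_gt0 // !lt_min de0 b0 ltr01.
have : t < Num.min (Num.min de b) 1.
  by rewrite /t ltr_pdivrMr // ltr_pMr // ?ltr1n // !lt_min de0 b0 ltr01.
rewrite !lt_min => /andP[/andP[tde tb] t1].
have Q := Hde t ltac:(by rewrite t0 tde).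
have Pm := Hb t ltac:(by rewrite gtr0_norm).
have Pp : A + t *: (B - A) = t *: B + (1 - t) *: A.
  by apply/matrixP => k l; rewrite !mxE; ring.
have Cv1 := @f_convex B A t HB HA ltac:(by rewrite ltW //= ltW).
rewrite -Pp in Cv1.
have HP : A + t *: (B - A) \in pos by rewrite Pp pos_conv // ltW //= ltW.
have Cv2 := @f_convex _ _ (1/2) HP Pm
  ltac:(by rewrite divr_ge0 //= ler_pdivrMr // mul1r ler1n).
have mid : 1 / 2 *: (A + t *: (B - A)) + (1 - 1 / 2) *: (A + t *: - (B - A)) = A.
  by apply/matrixP => k l; rewrite !mxE; field.
rewrite mid in Cv2.
move: Q; rewrite /slope mx_innerNl ler_pdivrMr // => Q.
move: Cv1 Cv2 Q.
set x1 := f (A + t *: (B - A)); set x2 := f (A + t *: - (B - A)).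
set y := f A; set yb := f B; set I := mx_inner (B - A) u.
have -> : 1 - 1 / 2 = 1 / 2 :> R by field.
move=> Cv1 Cv2 Q.
have H : 0 <= t * (yb - (y + I) - 0 + eps) by nra.
by rewrite pmulr_rge0 in H.
Qed.

End GradientInequality.

Lemma sum_eq1_gt0 (R : realType) k (f : 'I_k -> R) : \sum_(i < k) f i = 1 -> (0 < k)%N.
Proof. by case: k f => [f|//]; rewrite big_ord0 => /eqP; rewrite eq_sym oner_eq0. Qed.

Section Couplings.
Variables (R : realType) (n m : nat) (p : 'I_n -> R) (q : 'I_m -> R).
Local Notation M := 'M[R]_(n, m).
Local Notation pos := (@pos_mx R n m).

Lemma PiP (P : M) : P \in Pi p q <->
  [/\ P \in pos, \sum_(i < n) \sum_(j < m) P i j = 1,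
      (forall i, \sum_(j < m) P i j = p i) & (forall j, \sum_(i < n) P i j = q j)].
Proof.
split; first by move=> /set_mem [/set_mem [HP S] [Hr Hc]]; split.
by move=> [HP S Hr Hc]; apply/mem_set; split; [apply/mem_set; split | split].
Qed.

Lemma PiP_marginals (P : M) : \sum_(i < n) p i = 1 -> P \in pos ->
  (forall i, \sum_(j < m) P i j = p i) -> (forall j, \sum_(i < n) P i j = q j) ->
  P \in Pi p q.
Proof.
move=> p1 HP Hr Hc; apply/PiP; split => //.
by under eq_bigr do rewrite Hr.
Qed.

Lemma closure_Pi_linear (u : M) (c : R) (Q : M) : closure (Pi p q) Q ->
  (forall X, X \in Pi p q -> mx_inner X u = c) -> mx_inner Q u = c.
Proof.
move=> HQ Hc; have PiE X : Pi p q X -> X \in Pi p q by rewrite inE.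
apply/eqP; rewrite eq_le; apply/andP; split; last first.
  by apply: (closure_halfspace HQ) => X /PiE /Hc ->.
rewrite -lerN2 -mx_innerNr; apply: (closure_halfspace HQ) => X /PiE /Hc.
by rewrite mx_innerNr => ->.
Qed.

Lemma closure_Pi (Q : M) : closure (Pi p q) Q ->
  [/\ forall i j, 0 <= Q i j,
      forall i, \sum_(j < m) Q i j = p i & forall j, \sum_(i < n) Q i j = q j].
Proof.
move=> HQ; split.
- move=> i j; rewrite -mx_inner_deltar; apply: (closure_halfspace HQ) => X PiX.
  have /PiP [/posP HX _ _ _] : X \in Pi p q by rewrite inE.
  by rewrite mx_inner_deltar ltW.
- move=> i; rewrite -mx_inner_row_sel; apply: closure_Pi_linear HQ _ => X.
  by case/PiP => _ _ Hr _; rewrite mx_inner_row_sel Hr.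
- move=> j; rewrite -mx_inner_col_sel; apply: closure_Pi_linear HQ _ => X.
  by case/PiP => _ _ _ Hc; rewrite mx_inner_col_sel Hc.
Qed.

Lemma closure_Pi_midpoint (Q P : M) : closure (Pi p q) Q -> P \in Pi p q ->
  (1 / 2) *: Q + (1 - 1 / 2) *: P \in Pi p q.
Proof.
move=> /closure_Pi [Qnn Qrow Qcol] /PiP [/posP HP P1 Prow Pcol].
have p1 : \sum_(i < n) p i = 1.
  by rewrite -P1; apply: eq_bigr => i _; rewrite Prow.
apply: PiP_marginals => //.
- by apply/posP => i j; rewrite !mxE; have := Qnn i j; have := HP i j; lra.
- move=> i; under eq_bigr do rewrite !mxE.
  by rewrite big_split /= -!mulr_sumr Qrow Prow; field.
- move=> j; under eq_bigr do rewrite !mxE.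
  by rewrite big_split /= -!mulr_sumr Qcol Pcol; field.
Qed.

End Couplings.

Section GradientInverse.
Variables (R : realType) (n m : nat) (Phi : 'M[R]_(n, m) -> R).
Local Notation M := 'M[R]_(n, m).
Local Notation pos := (@pos_mx R n m).
Hypothesis Phi_smooth : smooth_on pos Phi.
Hypothesis Phi_strict : strictly_convex_on pos Phi.
Hypothesis grad_onto : forall U : M, exists2 A, A \in pos & grad Phi A = U.

Lemma Phi_continuous (A : M) : A \in pos -> {for A, continuous Phi}.
Proof. by move=> HA; have := (Phi_smooth [::]).1 A HA. Qed.

Lemma Phi_gradient_inequality (A B : M) : A \in pos -> B \in pos ->
  Phi A + mx_inner (B - A) (grad Phi A) <= Phi B.
Proof.
move=> HA HB.
exact: (gradient_inequality (strictly_convex_le Phi_strict) HA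
          (fun ij => (Phi_smooth [::]).2 ij A HA) HB).
Qed.

Definition tilt (u B : M) : R := Phi B - mx_inner B u.

(* Strict convexity makes the gradient inequality strict: apply the
   gradient inequality at the midpoint of A and B. *)
Lemma tilt_grad_strict (A B : M) : A \in pos -> B \in pos -> A != B ->
  tilt (grad Phi A) A < tilt (grad Phi A) B.
Proof.
move=> HA HB AB; rewrite /tilt.
set M0 := (1 / 2) *: A + (1 - 1 / 2) *: B.
have HM : M0 \in pos.
  by rewrite pos_conv // divr_ge0 //= ler_pdivrMr // mul1r ler1n.
have G := Phi_gradient_inequality HA HM.
have S : Phi M0 < 1 / 2 * Phi A + (1 - 1 / 2) * Phi B.
  by apply: Phi_strict => //; rewrite divr_gt0 //= ltr_pdivrMr // mul1r ltr1n.
move: G S.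
have -> : 1 - 1 / 2 = 1 / 2 :> R by field.
have -> : M0 - A = (1 / 2) *: (B - A).
  by apply/matrixP => k l; rewrite /M0 !mxE; field.
rewrite mx_innerZl mx_innerBl.
set x := Phi M0; set a := Phi A; set b := Phi B.
set ia := mx_inner A (grad Phi A); set ib := mx_inner B (grad Phi A).
move=> G S; lra.
Qed.

(* A chosen preimage under grad Phi; by grad_inv_strict it is the only one. *)
Definition grad_inv (u : M) : M := projT1 (cid2 (grad_onto u)).

Lemma grad_inv_pos u : grad_inv u \in pos.
Proof. by rewrite /grad_inv; case: (cid2 (grad_onto u)). Qed.

Lemma grad_invK u : grad Phi (grad_inv u) = u.
Proof. by rewrite /grad_inv; case: (cid2 (grad_onto u)). Qed.

Lemma grad_inv_min u B : B \in pos -> tilt u (grad_inv u) <= tilt u B.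
Proof.
move=> HB; have := Phi_gradient_inequality (grad_inv_pos u) HB.
rewrite grad_invK mx_innerBl /tilt.
set a := Phi (grad_inv u); set b := Phi B; set x := mx_inner B u.
set y := mx_inner (grad_inv u) u; move=> H; lra.
Qed.

Lemma grad_inv_strict u B : B \in pos -> B != grad_inv u ->
  tilt u (grad_inv u) < tilt u B.
Proof.
move=> HB BA; have := tilt_grad_strict (grad_inv_pos u) HB.
by rewrite grad_invK eq_sym; apply.
Qed.

Definition gap (u B : M) : R := tilt u B - tilt u (grad_inv u).

Lemma gap_conv u B l : B \in pos -> 0 <= l <= 1 ->
  gap u (l *: B + (1 - l) *: grad_inv u) <= l * gap u B.
Proof.
move=> HB /andP[l0 l1].
have Cv := strictly_convex_le Phi_strict (t := l) HB (grad_inv_pos u)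
  ltac:(by rewrite l0 l1).
move: Cv; rewrite /gap /tilt mx_innerDl !mx_innerZl.
set x := Phi _; set b := Phi B; set a := Phi (grad_inv u).
set ib := mx_inner B u; set ia := mx_inner (grad_inv u) u.
move=> Cv; nra.
Qed.

(* By compactness, gap u is bounded below by a positive constant on any
   sphere around grad_inv u lying in the cone. *)
Lemma gap_sphere u r : 0 < r -> (forall X, `|X - grad_inv u| = r -> X \in pos) ->
  exists2 k : R, 0 < k & forall X, `|X - grad_inv u| = r -> k <= gap u X.
Proof.
move=> r_gt0 Spos; set S := [set X : M | `|X - grad_inv u| = r].
have [[X0 SX0]|S0] := pselect (S !=set0); last first.
  by exists 1 => // X SX; exfalso; apply: S0; exists X.
have Scomp : compact S.
  apply: (@bounded_closed_compact_mx _ _ _ S (`|grad_inv u| + r)).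
    move=> X SX; rewrite -SX; apply: le_trans (ler_normD _ _).
    by rewrite addrC subrK.
  have -> : S = (fun X => `|X - grad_inv u|) @^-1` [set x | x = r] by [].
  apply: preimage_closed; last exact: closed_eq.
  by move=> X _; apply: dist_continuous.
have gcont : {within S, continuous (gap u)}.
  apply: continuous_in_subspaceT => X /set_mem SX.
  change {for X, continuous ((Phi - (fun B => mx_inner B u)) -
     cst (tilt u (grad_inv u)))}.
  apply: continuousB; last exact: cst_continuous.
  apply: continuousB; [exact: Phi_continuous (Spos _ SX)|exact: mx_inner_continuous].
have [c Sc cmin] := compact_EVT_min (ex_intro _ X0 SX0) Scomp gcont.
have {}Sc : S c by move: Sc; rewrite inE.
exists (gap u c) => [|X SX]; last by apply: cmin; rewrite inE.
rewrite /gap subr_gt0; apply: grad_inv_strict; first exact: Spos.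
apply/eqP => cA; move: Sc; rewrite /S /= cA subrr normr0 => r0.
by move: r_gt0; rewrite -r0 ltxx.
Qed.

(* gap u grows at least linearly away from grad_inv u: rescale B onto a small
   sphere around grad_inv u and use convexity of gap u. *)
Lemma gap_growth u (eps : R) : 0 < eps -> exists2 k : R, 0 < k &
  forall B, B \in pos -> eps <= `|B - grad_inv u| ->
    k * `|B - grad_inv u| <= gap u B.
Proof.
move=> eps0; set A0 := grad_inv u.
have [r r0 Hr] := pos_open (grad_inv_pos u).
pose e := Num.min eps (r / 2).
have e0 : 0 < e by rewrite lt_min eps0 divr_gt0.
have e_eps : e <= eps by rewrite ge_min lexx.
have e_r : e < r.
  by rewrite /e gt_min; apply/orP; right; rewrite ltr_pdivrMr // ltr_pMr // ltr1n.
have [k k0 Hk] := gap_sphere e0 (fun X (SX : `|X - A0| = e) => Hr X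
  ltac:(by rewrite SX)).
exists (k / e); first by rewrite divr_gt0.
move=> B HB Heps; set N := `|B - A0|.
have N0 : 0 < N by apply: lt_le_trans Heps.
set l := e / N.
have l0 : 0 < l by rewrite divr_gt0.
have l1 : l <= 1 by rewrite ler_pdivrMr // mul1r (le_trans e_eps).
have onS : `|l *: B + (1 - l) *: A0 - A0| = e.
  have -> : l *: B + (1 - l) *: A0 - A0 = l *: (B - A0).
    by apply/matrixP => i j; rewrite !mxE; ring.
  by rewrite normrZ gtr0_norm // divfK // gt_eqF.
have := le_trans (Hk _ onS) (@gap_conv u B l HB (ltac:(by rewrite ltW //= l1))).
move=> H; rewrite mulrAC ler_pdivrMr // [gap u B * e]mulrC.
by move: H; rewrite /l mulrAC ler_pdivlMr.
Qed.

Lemma gap_grad_inv u v :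
  gap u (grad_inv v) <= mx_inner (grad_inv v - grad_inv u) (v - u).
Proof.
have := grad_inv_min v (grad_inv_pos u).
rewrite /gap /tilt mx_innerBl !mx_innerBr.
set a := Phi (grad_inv v); set b := Phi (grad_inv u).
set x1 := mx_inner (grad_inv v) v; set x2 := mx_inner (grad_inv v) u.
set y1 := mx_inner (grad_inv u) v; set y2 := mx_inner (grad_inv u) u.
move=> H; lra.
Qed.

Lemma grad_inv_continuous : continuous grad_inv.
Proof.
move=> u; apply/(@cvgrPdist_lt _ _ _ _ (@nbhs_filter _ u)) => e e0.
apply/(@nbhs_normP _ M).
have [k k0 Hk] := gap_growth u e0.
set N := (n * m)%:R : R.
have N1 : 0 < N + 1 by rewrite ltr_wpDl.
exists (k / (N + 1)); first by rewrite /= divr_gt0.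
move=> v; rewrite /ball_ /= => Hv.
rewrite ltNge; apply/negP => Hd; rewrite distrC in Hd.
set d := `|grad_inv v - grad_inv u| in Hd; set w := `|v - u|.
have d0 : 0 < d by apply: lt_le_trans Hd.
have Hkd : k * d <= N * (d * w).
  apply: le_trans (Hk _ (grad_inv_pos v) Hd) _.
  apply: le_trans (gap_grad_inv u v) _; apply: le_trans (ler_norm _) _.
  exact: mx_inner_bound.
have kNw : k <= N * w by rewrite -(ler_pM2l d0) mulrCA mulrC.
have : w * (N + 1) < k by move: Hv; rewrite distrC -/w ltr_pdivlMr.
have := normr_ge0 (v - u); rewrite -/w => w0 Hw.
have : N * w < k by nra.
by rewrite ltNge kNw.
Qed.


(* Phi^*(u) is attained at grad_inv u. *)
Definition conj (u : M) : R := mx_inner (grad_inv u) u - Phi (grad_inv u).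

Lemma conj_ge u B : B \in pos -> mx_inner B u - Phi B <= conj u.
Proof.
move=> HB; have := grad_inv_min u HB; rewrite /conj /tilt.
set a := Phi (grad_inv u); set b := Phi B; set x := mx_inner B u.
set y := mx_inner (grad_inv u) u; move=> H; lra.
Qed.

Lemma legendre_conj u : legendre Phi u = (conj u)%:E.
Proof.
apply/eqP; rewrite eq_le; apply/andP; split.
  apply/ereal_supP => _ [A HA <-]; rewrite lee_fin.
  by apply: conj_ge; rewrite inE.
apply: ereal_sup_ubound; exists (grad_inv u) => //.
by have := grad_inv_pos u; rewrite inE.
Qed.

Section Duality.
Variables (p : 'I_n -> R) (q : 'I_m -> R).
Hypothesis Hp : p \in @simplex_pos R n.
Hypothesis Hq : q \in @simplex_pos R m.

Let p_pos i : 0 < p i. Proof. by move: Hp; rewrite inE => -[]. Qed.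
Let q_pos j : 0 < q j. Proof. by move: Hq; rewrite inE => -[]. Qed.
Let p_sum : \sum_(i < n) p i = 1. Proof. by move: Hp; rewrite inE => -[]. Qed.
Let q_sum : \sum_(j < m) q j = 1. Proof. by move: Hq; rewrite inE => -[]. Qed.

(* Reference indices, used to normalise alpha (+) beta. *)
Let i0 : 'I_n := Ordinal (sum_eq1_gt0 p_sum).
Let j0 : 'I_m := Ordinal (sum_eq1_gt0 q_sum).

Definition P0 : M := \matrix_(i, j) (p i * q j).

Lemma P0_pos : P0 \in pos.
Proof. by apply/posP => i j; rewrite mxE mulr_gt0 ?p_pos ?q_pos. Qed.

Lemma P0_row i : \sum_(j < m) P0 i j = p i.
Proof. by under eq_bigr do rewrite mxE; rewrite -mulr_sumr q_sum mulr1. Qed.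

Lemma P0_col j : \sum_(i < n) P0 i j = q j.
Proof. by under eq_bigr do rewrite mxE; rewrite -mulr_suml p_sum mul1r. Qed.

Lemma P0_Pi : P0 \in Pi p q.
Proof. exact: PiP_marginals p_sum P0_pos P0_row P0_col. Qed.

(* The dual objective, written as a function of u = alpha (+) beta. *)
Definition dual_fun (u : M) : R := mx_inner P0 u - conj u.

(* <P0, alpha (+) beta> = <p, alpha> + <q, beta>. *)
Lemma dual_objE a b : dual_obj Phi p q a b = (dual_fun (oplus a b))%:E.
Proof.
rewrite /dual_obj legendre_conj /dual_fun -EFinB; congr (_%:E); congr (_ - _).
rewrite mx_inner_oplus; congr (_ + _); apply: eq_bigr => k _.
  by rewrite P0_row.
by rewrite P0_col.
Qed.

Lemma dual_fun_le u B : B \in pos -> dual_fun u <= mx_inner (P0 - B) u + Phi B.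
Proof.
move=> HB; have := conj_ge u HB; rewrite /dual_fun mx_innerBl.
set a := conj u; set b := Phi B; set x := mx_inner B u.
set y := mx_inner P0 u; move=> H; lra.
Qed.

(* The matrices of the form alpha (+) beta are those whose "cross
   differences" u_ij + u_i0j0 - u_ij0 - u_i0j vanish. *)
Definition cross (i : 'I_n) (j : 'I_m) : M :=
  delta_mx i j + delta_mx i0 j0 - delta_mx i j0 - delta_mx i0 j.

Definition additive (u : M) : Prop := forall i j, mx_inner u (cross i j) = 0.

Lemma mx_inner_cross u i j : mx_inner u (cross i j) = u i j + u i0 j0 - u i j0 - u i0 j.
Proof. by rewrite /cross !mx_innerBr !mx_innerDr !mx_inner_deltar. Qed.

Lemma additive_oplus a b : additive (oplus a b).
Proof. by move=> i j; rewrite mx_inner_cross !mxE; ring. Qed.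

Lemma additive_line u w t : additive u -> additive w -> additive (u + t *: w).
Proof. by move=> Hu Hw i j; rewrite mx_innerDl mx_innerZl Hu Hw mulr0 addr0. Qed.

Lemma additiveE u : additive u ->
  u = oplus (fun i => u i j0) (fun j => u i0 j - u i0 j0).
Proof.
move=> Hu; apply/matrixP => i j; rewrite mxE.
have := Hu i j; rewrite mx_inner_cross => H.
by apply/eqP; rewrite -subr_eq0 -H; apply/eqP; ring.
Qed.

Lemma additive_closed : closed [set u : M | additive u].
Proof.
have -> : [set u : M | additive u] = \bigcap_(k in [set: 'I_n * 'I_m])
    ((fun u => mx_inner u (cross k.1 k.2)) @^-1` [set x | x = 0]).
  apply/seteqP; split => u /= Hu; first by move=> k _; exact: Hu.
  by move=> i j; exact: (Hu (i, j)).
apply: closed_bigI => k _; apply: preimage_closed; last exact: closed_eq.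
by move=> x _; apply: mx_inner_continuous.
Qed.

Lemma additive_pairing u Q Q' : additive u -> Q \in Pi p q -> Q' \in Pi p q ->
  mx_inner Q u = mx_inner Q' u.
Proof.
move=> /additiveE -> /PiP [_ _ Qr Qc] /PiP [_ _ Q'r Q'c].
by apply: mx_inner_marginals => k; rewrite ?Qr ?Q'r ?Qc ?Q'c.
Qed.

Lemma weak_duality u Q : additive u -> Q \in Pi p q -> dual_fun u <= Phi Q.
Proof.
move=> Hu HQ; have /PiP [HQp _ _ _] := HQ.
have := dual_fun_le u HQp.
by rewrite mx_innerBl (additive_pairing Hu P0_Pi HQ) subrr add0r.
Qed.

(* Coercivity: testing dual_fun_le against B = P0 +- e E_ij, which stays in
   the cone for a fixed small e, bounds dual_fun u by C - e |u_ij|. *)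
Lemma dual_fun_coercive : exists2 e : R, 0 < e & exists C : R,
  forall u, dual_fun u <= C - e * `|u|.
Proof.
have [r r0 Hr] := pos_open P0_pos.
pose e := r / 2.
have e0 : 0 < e by rewrite divr_gt0.
have er : e < r by rewrite /e ltr_pdivrMr // ltr_pMr // ltr1n.
have Hpert s i j : `|s| = 1 -> P0 + (s * e) *: delta_mx i j \in pos.
  move=> s1; apply: Hr; rewrite addrC addKr normrZ normrM s1 mul1r (gtr0_norm e0).
  apply: le_lt_trans er; rewrite -[leRHS]mulr1.
  by apply: ler_wpM2l; [exact: ltW | exact: delta_mx_norm].
pose C (k : 'I_n * 'I_m) := Num.max (Phi (P0 + (1 * e) *: delta_mx k.1 k.2))
                                    (Phi (P0 + (-1 * e) *: delta_mx k.1 k.2)).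
pose Cb := \big[Num.max/0]_(k : 'I_n * 'I_m) C k.
have CbC i j : C (i, j) <= Cb by exact: (le_bigmax _ (fun k => C k) (i, j)).
have test s i j u : `|s| = 1 -> Phi (P0 + (s * e) *: delta_mx i j) <= Cb ->
    dual_fun u <= Cb - s * e * u i j.
  move=> s1 HC; apply: le_trans (dual_fun_le u (Hpert s i j s1)) _.
  rewrite opprD addrA subrr add0r mx_innerNl mx_innerZl mx_inner_deltal.
  by move: HC; set x := Phi _; set y := s * e * u i j; move=> HC; lra.
have entry u i j : dual_fun u <= Cb - e * `|u i j|.
  have C1 : Phi (P0 + (1 * e) *: delta_mx i j) <= Cb.
    by apply: le_trans (CbC i j); rewrite le_max lexx.
  have C2 : Phi (P0 + (-1 * e) *: delta_mx i j) <= Cb.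
    by apply: le_trans (CbC i j); rewrite le_max lexx orbT.
  have [uij|uij] := leP 0 (u i j).
    by rewrite ger0_norm //; move: (test 1 i j u (normr1 _) C1); rewrite mul1r.
  rewrite ltr0_norm // mulrN.
  by move: (test (-1) i j u ltac:(by rewrite normrN normr1) C2); rewrite mulN1r mulNr.
exists e => //; exists Cb => u.
have [u0|un0] := eqVneq (mx_norm u) 0.
  have -> : `|u| = 0 by [].
  have := entry u i0 j0; have := normr_ge0 (u i0 j0).
  set x := `|u i0 j0|; move=> *; nra.
have [k Hk] := mx_norm_neq0 un0.
by have -> : `|u| = `|u k.1 k.2| by [].
Qed.

Lemma dual_fun_continuous : continuous dual_fun.
Proof.
move=> u.
change {for u, continuous ((fun v => mx_inner P0 v) -
   ((fun v => mx_inner (grad_inv v) v) - (Phi \o grad_inv)))}.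
apply: continuousB.
  exact: (mx_inner_cvg (F := nbhs u) (f := cst P0) (g := id) (cvg_cst P0) cvg_id).
apply: continuousB.
  exact: (mx_inner_cvg (F := nbhs u) (@grad_inv_continuous u) cvg_id).
apply: continuous_comp; first exact: grad_inv_continuous.
exact: Phi_continuous (grad_inv_pos u).
Qed.

(* The dual problem has a maximiser: maximise the continuous dual_fun over
   the compact set of additive matrices in a large enough ball. *)
Lemma dual_fun_max : exists2 us, additive us &
  forall u, additive u -> dual_fun u <= dual_fun us.
Proof.
have [e e0 [C HC]] := dual_fun_coercive.
pose r := Num.max 0 ((C - dual_fun 0) / e).
pose K := [set u : M | additive u /\ `|u| <= r].
have K0 : K 0.
  by split; [move=> i j; rewrite mx_inner0l | rewrite normr0 le_max lexx].
have Kcomp : compact K.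
  apply: (@bounded_closed_compact_mx _ _ _ K r); first by move=> X [].
  have -> : K = [set u | additive u] `&` ((fun u => `|u - 0|) @^-1` [set x | x <= r]).
    by apply/seteqP; split => u /=; rewrite subr0.
  apply: closedI; first exact: additive_closed.
  apply: preimage_closed; last exact: closed_le.
  by move=> x _; apply: dist_continuous.
have [c Kc cmax] := compact_EVT_max (ex_intro _ 0 K0) Kcomp
  (continuous_subspaceT dual_fun_continuous).
have [Hc _] : K c by move: Kc; rewrite inE.
exists c => // u Hu.
have [ur|ur] := leP `|u| r; first by apply: cmax; rewrite inE.
apply: le_trans (cmax 0 _); last by rewrite inE.
have H2 : (C - dual_fun 0) / e <= r by rewrite le_max lexx orbT.
rewrite ler_pdivrMr // in H2.
have H3 : e * r < e * `|u| by rewrite ltr_pM2l.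
move: (HC u) H2 H3; set a := e * r; set b := e * `|u|.
by rewrite [r * e]mulrC -/a => *; lra.
Qed.

(* First-order condition at a dual maximiser: the derivative of dual_fun
   in an additive direction w is <P0 - grad_inv us, w>, so it vanishes. *)
Lemma dual_first_order us : additive us ->
  (forall u, additive u -> dual_fun u <= dual_fun us) ->
  forall w, additive w -> mx_inner (grad_inv us) w = mx_inner P0 w.
Proof.
move=> Hus Hmax w Hw.
pose g (t : R) := mx_inner (grad_inv (us + t *: w)) w.
have sign t : t * (mx_inner P0 w - g t) <= 0.
  have H1 := Hmax _ (additive_line t Hus Hw).
  have H2 := conj_ge us (grad_inv_pos (us + t *: w)).
  move: H1 H2; rewrite /dual_fun /conj /g mx_innerDr mx_innerZr !mx_innerDr !mx_innerZr.
  set a := mx_inner P0 us; set b := mx_inner P0 w.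
  set x := mx_inner (grad_inv (us + t *: w)) us.
  set y := mx_inner (grad_inv (us + t *: w)) w.
  set z := Phi (grad_inv (us + t *: w)).
  set c := mx_inner (grad_inv us) us - Phi (grad_inv us).
  move=> *; nra.
have g0 : g 0 = mx_inner (grad_inv us) w by rewrite /g scale0r addr0.
have Hline : (fun t : R => us + t *: w) @ (0 : R) --> us + 0 *: w.
  apply: cvgD; [exact: cvg_cst | apply: cvgZ; [exact: cvg_id | exact: cvg_cst]].
have HA : (fun t : R => grad_inv (us + t *: w)) @ (0 : R) --> grad_inv us.
  by have := cvg_comp _ _ Hline (@grad_inv_continuous (us + 0 *: w)); rewrite scale0r addr0.
have gc : g @ (0 : R) --> g 0.
  by rewrite g0; exact: (mx_inner_cvg (F := nbhs (0 : R)) HA (cvg_cst w)).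
by rewrite -g0; apply: sign_condition_at0 gc sign.
Qed.

Lemma dual_solution : exists2 us, additive us & grad_inv us \in Pi p q.
Proof.
have [us Hus Hmax] := dual_fun_max.
have FO := dual_first_order Hus Hmax.
exists us => //; apply: PiP_marginals (grad_inv_pos us) _ _ => //.
  by move=> i; have := FO _ (additive_oplus _ _ : additive (@row_sel R n m i)); rewrite !mx_inner_row_sel P0_row.
by move=> j; have := FO _ (additive_oplus _ _ : additive (@col_sel R n m j)); rewrite !mx_inner_col_sel P0_col.
Qed.

Lemma dual_fun_grad_inv u : additive u -> grad_inv u \in Pi p q ->
  dual_fun u = Phi (grad_inv u).
Proof.
move=> Hu HP; rewrite /dual_fun /conj (additive_pairing Hu P0_Pi HP).
by rewrite opprB addrC subrK.
Qed.

Lemma strict_minimizer P : P \in Pi p q -> additive (grad Phi P) ->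
  forall Q, Q \in Pi p q -> Q != P -> Phi P < Phi Q.
Proof.
move=> HP Hg Q HQ QP; have /PiP [HPp _ _ _] := HP; have /PiP [HQp _ _ _] := HQ.
have := tilt_grad_strict HPp HQp ltac:(by rewrite eq_sym).
by rewrite /tilt (additive_pairing Hg HQ HP) ltrD2r.
Qed.

(* Complementary slackness: if Phi P does not exceed the dual value at v,
   then P minimises the v-tilted function, hence grad Phi P = v. *)
Lemma dual_attained_grad v P : additive v -> P \in Pi p q ->
  Phi P <= dual_fun v -> grad Phi P = v.
Proof.
move=> Hv HP Hle; have /PiP [HPp _ _ _] := HP.
have tle : tilt v P <= tilt v (grad_inv v).
  move: Hle; rewrite /dual_fun /conj /tilt (additive_pairing Hv P0_Pi HP).
  set a := Phi P; set b := mx_inner P v.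
  set x := mx_inner (grad_inv v) v; set y := Phi (grad_inv v); move=> H; lra.
have [PA|PA] := eqVneq P (grad_inv v); first by rewrite PA grad_invK.
by have := grad_inv_strict HPp PA; rewrite ltNge tle.
Qed.

Lemma midpoint_bound (Psi : M -> R) Q P :
  {within closure (Pi p q), continuous Psi} ->
  (forall X, X \in Pi p q -> Psi X = Phi X) ->
  closure (Pi p q) Q -> P \in Pi p q ->
  Phi ((1 / 2) *: Q + (1 - 1 / 2) *: P) <= 1 / 2 * Psi Q + (1 - 1 / 2) * Phi P.
Proof.
move=> Psic PsiE HQ HP; have /PiP [HPp _ _ _] := HP.
have /PiP [HM _ _ _] := closure_Pi_midpoint HQ HP.
apply/ler_addgt0Pr => eps eps0.
have eps2 : 0 < eps / 2 by rewrite divr_gt0.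
have [d1 d10 Hd1] := continuous_at_dist (Phi_continuous HM) eps2.
have [d2 d20 Hd2] := within_continuous_dist Psic HQ eps2.
have [X [PiX HX]] := closure_dist HQ (ltac:(by rewrite lt_min d10 d20) : 0 < Num.min d1 d2).
move: HX; rewrite lt_min => /andP[HX1 HX2].
have XPi : X \in Pi p q by rewrite inE.
have /PiP [HXp _ _ _] := XPi.
have Cv := strictly_convex_le Phi_strict (t := 1 / 2) HXp HPp
  ltac:(by rewrite divr_ge0 //= ler_pdivrMr // mul1r ler1n).
have H2 := Hd2 X HX2 (subset_closure PiX); rewrite (PsiE X XPi) in H2.
have HMX : `|(1 / 2) *: Q + (1 - 1 / 2) *: P - ((1 / 2) *: X + (1 - 1 / 2) *: P)| < d1.
  have -> : (1 / 2) *: Q + (1 - 1 / 2) *: P - ((1 / 2) *: X + (1 - 1 / 2) *: P)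
      = (1 / 2) *: (Q - X).
    by apply/matrixP => i j; rewrite !mxE; field.
  rewrite normrZ; apply: le_lt_trans HX1.
  rewrite -[leRHS]mul1r ler_wpM2r // ger0_norm // ?divr_ge0 //.
  by rewrite ler_pdivrMr // mul1r ler1n.
have H1 := Hd1 _ HMX.
move: Cv H1 H2; have -> : 1 - 1 / 2 = 1 / 2 :> R by field.
set z := Phi ((1 / 2) *: X + (1 / 2) *: P).
set a := Phi ((1 / 2) *: Q + (1 / 2) *: P).
set b := Psi Q; set c := Phi P; set x := Phi X.
move=> Cv /ltr_normlP [H1 H1'] /ltr_normlP [H2 H2']; lra.
Qed.

(* The strict minimiser on Pi p q stays the unique minimiser on its closure
   of any continuous extension Psi of Phi: Psi >= Phi P there by continuity,
   and a second minimiser Q would make the coupling (Q + P) / 2 at least as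
   good as P. *)
Lemma closure_unique_minimizer (P : M) (Psi : M -> R) :
  P \in Pi p q -> (forall Q, Q \in Pi p q -> Q != P -> Phi P < Phi Q) ->
  {within closure (Pi p q), continuous Psi} ->
  (forall X, X \in Pi p q -> Psi X = Phi X) ->
  unique_minimizer (closure (Pi p q)) Psi P.
Proof.
move=> HP Pstrict Psic PsiE.
have lower Q : closure (Pi p q) Q -> Psi P <= Psi Q.
  rewrite (PsiE P HP); apply: closure_lower_bound Psic _ Q => X PiX.
  have XPi : X \in Pi p q by rewrite inE.
  rewrite PsiE //; have [->|XP] := eqVneq X P; [exact: lexx | exact/ltW/Pstrict].
have PclP : closure (Pi p q) P by apply: subset_closure; rewrite -inE.
split; first by rewrite inE.
split; first by move=> Q; rewrite inE; apply: lower.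
move=> Q /[!inE] HQ Hmin.
have QP : Psi Q <= Phi P by rewrite -(PsiE P HP); apply: Hmin; rewrite inE.
have Mle := midpoint_bound Psic PsiE HQ HP.
have MP : (1 / 2) *: Q + (1 - 1 / 2) *: P = P.
  apply/eqP/negPn/negP => MP.
  have := Pstrict _ (closure_Pi_midpoint HQ HP) MP.
  by move: Mle QP; set a := Phi _; set b := Psi Q; set c := Phi P => *; lra.
apply/matrixP => i j; have := congr1 (fun X : M => X i j) MP; rewrite !mxE.
by set x := Q i j; set y := P i j => *; lra.
Qed.

End Duality.
End GradientInverse.

Theorem theorem1 (R : realType) (n m : nat) (Phi : 'M[R]_(n, m) -> R) :
  smooth_on (@pos_mx R n m) Phi ->
  strictly_convex_on (@pos_mx R n m) Phi ->
  (forall U : 'M[R]_(n, m), exists2 A, A \in @pos_mx R n m & grad Phi A = U) ->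
  forall (p : 'I_n -> R) (q : 'I_m -> R),
    p \in @simplex_pos R n -> q \in @simplex_pos R m ->
    exists Pstar : 'M[R]_(n, m),
      [/\ unique_minimizer (Pi p q) Phi Pstar,
          (forall Psi : 'M[R]_(n, m) -> R,
             {within closure (Pi p q), continuous Psi} ->
             (forall P, P \in Pi p q -> Psi P = Phi P) ->
             unique_minimizer (closure (Pi p q)) Psi Pstar),
          (exists a b, is_dual_max Phi p q a b) &
          (forall a b, is_dual_max Phi p q a b ->
             forall i j, grad Phi Pstar i j = a i + b j)].
Proof.
move=> Hs Hc Hsurj p q Hp Hq.
have [u u_add P_Pi] := dual_solution Hs Hc Hsurj Hp Hq.
set P := grad_inv Hsurj u in P_Pi *.
have [a0 [b0 uE]] : exists a0 b0, u = oplus a0 b0.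
  by do 2 eexists; exact: additiveE u_add.
have P_strict : forall Q, Q \in Pi p q -> Q != P -> Phi P < Phi Q.
  by apply: (strict_minimizer Hs Hc P_Pi); rewrite grad_invK.
have P_dual : dual_fun Hsurj p q (oplus a0 b0) = Phi P.
  by rewrite -uE; exact: dual_fun_grad_inv u_add P_Pi.
exists P; split.
- exact: strict_unique_minimizer P_Pi P_strict.
- move=> Psi Psic PsiE; exact: (closure_unique_minimizer Hs Hc P_Pi P_strict Psic PsiE).
- exists a0, b0 => a b; rewrite !(dual_objE Hs Hc Hsurj Hp Hq) lee_fin P_dual.
  exact: weak_duality (additive_oplus Hp Hq a b) P_Pi.
- move=> a b Hmax i j.
  have := Hmax a0 b0; rewrite !(dual_objE Hs Hc Hsurj Hp Hq) lee_fin P_dual => Hle.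
  by rewrite (dual_attained_grad Hs Hc (additive_oplus Hp Hq a b) P_Pi Hle) mxE.
Qed.
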